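(* Let $\bar P_1,\bar P_2>0$ and $0<h_1\le h_2$. For $\mathbf P=(P_1,P_2)$ with $0\le P_k\le\bar P_k$ let $$R(\mathbf P)=\tfrac12\big[\log(1+P_1)+\log(1+P_2)-\log(1+h_1P_1+h_2P_2)\big]^+ .$$ Then the following allocation maximizes $R$ over $[0,\bar P_1]\times[0,\bar P_2]$: $$(P^*_1,P^*_2)=\begin{cases}(\bar P_1,\bar P_2),&\text{if } h_1\le1+h_2\bar P_2\text{ and }h_2<1+h_1\bar P_1,\\(\bar P_1,0),&\text{if } h_1<1\text{ and }h_2\ge1+h_1\bar P_1,\\(0,0),&\text{otherwise.}\end{cases}$$
   Context: $\log$ base 2, $[x]^+=\max\{x,0\}$. $R(\mathbf P)$ is the secrecy sum-rate bound of the superposition region of the standardized Gaussian two-way wire-tap channel, with $h_1,h_2$ the standardized eavesdropper gains of terminals 1 and 2. *)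

From Stdlib Require Import Reals Lra.
Open Scope R_scope.

Definition log2 (x : R) : R := ln x / ln 2.

Definition pos_part (x : R) : R := Rmax x 0.

Definition Rsec (h1 h2 P1 P2 : R) : R :=
  / 2 * pos_part (log2 (1 + P1) + log2 (1 + P2) - log2 (1 + h1 * P1 + h2 * P2)).

Definition Pstar (h1 h2 Pb1 Pb2 : R) : R * R :=
  if Rle_dec h1 (1 + h2 * Pb2) then
    if Rlt_dec h2 (1 + h1 * Pb1) then (Pb1, Pb2)
    else if Rlt_dec h1 1 then (Pb1, 0) else (0, 0)
  else if Rlt_dec h1 1 then
    if Rle_dec (1 + h1 * Pb1) h2 then (Pb1, 0) else (0, 0)
  else (0, 0).

(* Write F(P1,P2) = (1+P1)(1+P2) / (1+h1 P1+h2 P2), so that R(P) = [log F(P)]^+ / 2;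
   it suffices to show F(P) <= max(F(Q), 1) on the box, Q being the claimed optimum.
   For fixed P2, F is monotone in P1 with the sign of 1+h2 P2-h1, and symmetrically in P2;
   hence F is bounded on the box by its values at the four corners, with F(0,0) = 1.
   In each case of the allocation, the same sign conditions show that every corner is
   dominated by F(Q) or by 1. *)

From Stdlib Require Import Reals.
From Stdlib Require Import Lra Psatz.
Open Scope R_scope.

Lemma ln2_pos : 0 < ln 2.
Proof. rewrite <- ln_1; apply ln_increasing; lra. Qed.

Lemma log2_le x y : 0 < x -> x <= y -> log2 x <= log2 y.
Proof.
  intros Hx [Hlt | ->]; [|lra].
  unfold log2, Rdiv; apply Rmult_le_compat_r.
  - left; apply Rinv_0_lt_compat, ln2_pos.
  - left; apply ln_increasing; lra.
Qed.

Lemma log2_1 : log2 1 = 0.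
Proof. unfold log2; rewrite ln_1; field; apply Rgt_not_eq, ln2_pos. Qed.

Lemma pos_part_log2_le x y :
  0 < x -> x <= Rmax y 1 -> pos_part (log2 x) <= pos_part (log2 y).
Proof.
  intros Hx Hxy; unfold pos_part; unfold Rmax in Hxy.
  destruct (Rle_dec y 1) as [Hy1 | Hy1].
  - assert (log2 x <= 0) by (rewrite <- log2_1; apply log2_le; lra).
    rewrite (Rmax_right (log2 x) 0) by lra; apply Rmax_r.
  - apply Rle_max_compat_r, log2_le; lra.
Qed.

Section SumRateRatio.

Variables h1 h2 : R.
Hypothesis h1_ge0 : 0 <= h1.
Hypothesis h2_ge0 : 0 <= h2.

Definition ratio (P1 P2 : R) : R := (1 + P1) * (1 + P2) / (1 + h1 * P1 + h2 * P2).

Lemma ratio_pos P1 P2 : 0 <= P1 -> 0 <= P2 -> 0 < ratio P1 P2.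
Proof. intros; unfold ratio; apply Rdiv_lt_0_compat; nra. Qed.

Lemma ratio_0_0 : ratio 0 0 = 1.
Proof. unfold ratio; field_simplify; lra. Qed.

Lemma Rsec_ratio P1 P2 : 0 <= P1 -> 0 <= P2 ->
  Rsec h1 h2 P1 P2 = / 2 * pos_part (log2 (ratio P1 P2)).
Proof.
  intros H1 H2; unfold Rsec, ratio, log2, Rdiv.
  assert (Hden : 0 < 1 + h1 * P1 + h2 * P2) by nra.
  rewrite (ln_mult ((1 + P1) * (1 + P2))), ln_mult, ln_Rinv;
    try apply Rinv_0_lt_compat; try nra.
  do 2 f_equal; ring.
Qed.

Lemma ratio_sub_l a b P2 : 0 <= a -> 0 <= b -> 0 <= P2 ->
  ratio b P2 - ratio a P2 =
  (b - a) * (1 + h2 * P2 - h1) * (1 + P2)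
  / ((1 + h1 * a + h2 * P2) * (1 + h1 * b + h2 * P2)).
Proof. intros; unfold ratio; field; nra. Qed.

Lemma ratio_sub_r P1 a b : 0 <= P1 -> 0 <= a -> 0 <= b ->
  ratio P1 b - ratio P1 a =
  (b - a) * (1 + h1 * P1 - h2) * (1 + P1)
  / ((1 + h1 * P1 + h2 * a) * (1 + h1 * P1 + h2 * b)).
Proof. intros; unfold ratio; field; nra. Qed.

Lemma ratio_le_l a b P2 : 0 <= a -> 0 <= b -> 0 <= P2 ->
  (a - b) * (1 + h2 * P2 - h1) <= 0 -> ratio a P2 <= ratio b P2.
Proof.
  intros Ha Hb HP2 Hsign.
  enough (0 <= ratio b P2 - ratio a P2) by lra.
  rewrite ratio_sub_l by assumption; unfold Rdiv.
  apply Rmult_le_pos; [apply Rmult_le_pos; nra|].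
  left; apply Rinv_0_lt_compat, Rmult_lt_0_compat; nra.
Qed.

Lemma ratio_le_r P1 a b : 0 <= P1 -> 0 <= a -> 0 <= b ->
  (a - b) * (1 + h1 * P1 - h2) <= 0 -> ratio P1 a <= ratio P1 b.
Proof.
  intros HP1 Ha Hb Hsign.
  enough (0 <= ratio P1 b - ratio P1 a) by lra.
  rewrite ratio_sub_r by assumption; unfold Rdiv.
  apply Rmult_le_pos; [apply Rmult_le_pos; nra|].
  left; apply Rinv_0_lt_compat, Rmult_lt_0_compat; nra.
Qed.

Lemma ratio_le_max_ends_l Pb1 P1 P2 : 0 <= P1 <= Pb1 -> 0 <= P2 ->
  ratio P1 P2 <= Rmax (ratio 0 P2) (ratio Pb1 P2).
Proof.
  intros HP1 HP2; destruct (Rle_lt_dec 0 (1 + h2 * P2 - h1)).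
  - eapply Rle_trans; [|apply Rmax_r]; apply ratio_le_l; nra.
  - eapply Rle_trans; [|apply Rmax_l]; apply ratio_le_l; nra.
Qed.

Lemma ratio_le_max_ends_r Pb2 P1 P2 : 0 <= P1 -> 0 <= P2 <= Pb2 ->
  ratio P1 P2 <= Rmax (ratio P1 0) (ratio P1 Pb2).
Proof.
  intros HP1 HP2; destruct (Rle_lt_dec 0 (1 + h1 * P1 - h2)).
  - eapply Rle_trans; [|apply Rmax_r]; apply ratio_le_r; nra.
  - eapply Rle_trans; [|apply Rmax_l]; apply ratio_le_r; nra.
Qed.

Definition corners_below (Pb1 Pb2 v : R) : Prop :=
  ratio 0 Pb2 <= v /\ ratio Pb1 0 <= v /\ ratio Pb1 Pb2 <= v.

Lemma ratio_le_of_corners Pb1 Pb2 v P1 P2 : 0 <= P1 <= Pb1 -> 0 <= P2 <= Pb2 ->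
  1 <= v -> corners_below Pb1 Pb2 v -> ratio P1 P2 <= v.
Proof.
  intros HP1 HP2 Hv (H0b & Hb0 & Hbb).
  assert (Hends : forall Q1, 0 <= Q1 -> ratio Q1 0 <= v -> ratio Q1 Pb2 <= v ->
            ratio Q1 P2 <= v).
  { intros Q1 HQ1 HQ0 HQb.
    eapply Rle_trans; [apply (ratio_le_max_ends_r Pb2); assumption|].
    apply Rmax_lub; assumption. }
  eapply Rle_trans; [apply (ratio_le_max_ends_l Pb1); lra|].
  apply Rmax_lub; apply Hends; rewrite ?ratio_0_0; lra.
Qed.

Lemma Rsec_le_of_corners Pb1 Pb2 Q1 Q2 v P1 P2 : 0 <= Q1 -> 0 <= Q2 ->
  corners_below Pb1 Pb2 v -> v <= Rmax (ratio Q1 Q2) 1 ->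
  0 <= P1 <= Pb1 -> 0 <= P2 <= Pb2 -> Rsec h1 h2 P1 P2 <= Rsec h1 h2 Q1 Q2.
Proof.
  intros HQ1 HQ2 Hcorners Hv HP1 HP2.
  rewrite !Rsec_ratio by lra.
  apply Rmult_le_compat_l; [lra|].
  apply pos_part_log2_le; [apply ratio_pos; lra|].
  apply (ratio_le_of_corners Pb1 Pb2); [assumption|assumption|apply Rmax_r|].
  destruct Hcorners as (? & ? & ?); repeat split; eapply Rle_trans; eassumption.
Qed.

Lemma corners_below_full Pb1 Pb2 : 0 <= Pb1 -> 0 <= Pb2 ->
  h1 <= 1 + h2 * Pb2 -> h2 <= 1 + h1 * Pb1 -> corners_below Pb1 Pb2 (ratio Pb1 Pb2).
Proof.
  intros; repeat split; [apply ratio_le_l | apply ratio_le_r | apply Rle_refl]; nra.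
Qed.

Lemma corners_below_first Pb1 Pb2 : 0 <= Pb1 -> 0 <= Pb2 ->
  1 + h1 * Pb1 <= h2 -> corners_below Pb1 Pb2 (Rmax (ratio Pb1 0) 1).
Proof.
  intros HPb1 HPb2 Hh2; assert (1 <= h2) by nra; repeat split.
  - eapply Rle_trans; [|apply Rmax_r]; rewrite <- ratio_0_0; apply ratio_le_r; nra.
  - apply Rmax_l.
  - eapply Rle_trans; [|apply Rmax_l]; apply ratio_le_r; nra.
Qed.

Lemma corners_below_one Pb1 Pb2 : 0 <= Pb1 -> 0 <= Pb2 -> 1 <= h1 -> 1 <= h2 ->
  1 + h1 * Pb1 <= h2 \/ 1 + h2 * Pb2 <= h1 -> corners_below Pb1 Pb2 1.
Proof.
  intros HPb1 HPb2 Hh1 Hh2 Hdom.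
  assert (H0b : ratio 0 Pb2 <= 1) by (rewrite <- ratio_0_0; apply ratio_le_r; nra).
  assert (Hb0 : ratio Pb1 0 <= 1) by (rewrite <- ratio_0_0; apply ratio_le_l; nra).
  repeat split; try assumption.
  destruct Hdom.
  - eapply Rle_trans; [|exact Hb0]; apply ratio_le_r; nra.
  - eapply Rle_trans; [|exact H0b]; apply ratio_le_l; nra.
Qed.

End SumRateRatio.

Lemma Pstar_spec Pb1 Pb2 h1 h2 : 0 < Pb1 -> 0 < Pb2 -> 0 < h1 -> h1 <= h2 ->
  let P := Pstar h1 h2 Pb1 Pb2 in
  (0 <= fst P <= Pb1 /\ 0 <= snd P <= Pb2) /\
  exists v, corners_below h1 h2 Pb1 Pb2 v /\ v <= Rmax (ratio h1 h2 (fst P) (snd P)) 1.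
Proof.
  intros HPb1 HPb2 Hh1 Hh12 P; subst P; unfold Pstar.
  assert (Hh1_ge0 : 0 <= h1) by lra; assert (Hh2_ge0 : 0 <= h2) by lra.
  destruct (Rle_dec h1 (1 + h2 * Pb2)) as [Hle1 | Hgt1].
  - destruct (Rlt_dec h2 (1 + h1 * Pb1)) as [Hlt2 | Hge2]; [|apply Rnot_lt_le in Hge2].
    + split; [simpl; lra|]. exists (ratio h1 h2 Pb1 Pb2); split; [|apply Rmax_l].
      apply corners_below_full; lra.
    + destruct (Rlt_dec h1 1) as [_ | Hh1_ge1]; (split; [simpl; lra|]).
      * eexists; split; [apply corners_below_first; lra | apply Rle_refl].
      * exists 1; split; [|apply Rmax_r].
        apply corners_below_one; lra.
  - assert (Hh1gt : 1 < h1) by nra.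
    destruct (Rlt_dec h1 1) as [Hh1_lt1 | _]; [lra|].
    split; [simpl; lra|]. exists 1; split; [|apply Rmax_r].
    apply corners_below_one; lra.
Qed.

Theorem theorem4 (Pb1 Pb2 h1 h2 : R) :
  0 < Pb1 -> 0 < Pb2 -> 0 < h1 -> h1 <= h2 ->
  let P := Pstar h1 h2 Pb1 Pb2 in
  (0 <= fst P <= Pb1 /\ 0 <= snd P <= Pb2) /\
  forall P1 P2 : R, 0 <= P1 <= Pb1 -> 0 <= P2 <= Pb2 ->
    Rsec h1 h2 P1 P2 <= Rsec h1 h2 (fst P) (snd P).
Proof.
  intros HPb1 HPb2 Hh1 Hh12 P.
  destruct (Pstar_spec Pb1 Pb2 h1 h2 HPb1 HPb2 Hh1 Hh12) as [Hbox (v & Hcorners & Hv)].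
  split; [exact Hbox|].
  intros P1 P2 HP1 HP2.
  apply (Rsec_le_of_corners h1 h2 ltac:(lra) ltac:(lra) Pb1 Pb2 _ _ v); tauto.
Qed.
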